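(* Let $\omega>0$, $\bar r>0$, $\bar v>0$ and $T>0$ be such that $e^{AT}\begin{bmatrix}-\bar r\\ \bar v\end{bmatrix}=\begin{bmatrix}\bar r\\ \bar v\end{bmatrix}$, where $A=\begin{bmatrix}0&1\\ \omega^2&0\end{bmatrix}$, and let $B=\begin{bmatrix}0\\-\omega^2\end{bmatrix}$. Consider the hybrid system with state $(x,\tau)$, $x=(x_p,x_v)\in\mathbb R^2$, input $u\in\mathbb R$: flow: $\dot x=Ax+Bu$, $\dot\tau=1$, for $(x,\tau)\in\mathcal C\times[-T,2T]$; jump: $x^+=x+\begin{bmatrix}-2\bar r\\0\end{bmatrix}$, $\tau^+=\tau-T$, for $(x,\tau)\in\mathcal D\times[-T,2T]$, where $\mathcal C=[-\bar r,\bar r]\times\mathbb R$ and $\mathcal D=\{x\in\mathcal C: x_p=\bar r\}$. Let $x_r(\tau)=e^{A\tau}\begin{bmatrix}-\bar r\\ \bar v\end{bmatrix}$ and define the tracking error $\varepsilon=(\varepsilon_p,\varepsilon_v)=x-x_r(\tau)$. Then along solutions the tracking error evolves according to the hybrid dynamics $$\dot\varepsilon=A\varepsilon+Bu \ \text{(during flows)},\qquad \varepsilon^+=\varepsilon+\bar r\begin{bmatrix}\eta(\varepsilon_p)+\frac1{\eta(\varepsilon_p)}-2\\[2pt] \omega\Big(\frac1{\eta(\varepsilon_p)}-\eta(\varepsilon_p)\Big)\end{bmatrix}\ \text{(at jumps)},$$ where $\eta(\varepsilon_p):=\dfrac{\varepsilon_p-\bar r+\sqrt{\varepsilon_p^2-2\bar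 r\varepsilon_p+(\bar v/\omega)^2}}{\bar v/\omega-\bar r}$.
   Context: Solutions of the hybrid system are understood in the standard hybrid-time-domain sense (Goebel–Sanfelice–Teel). It is known (under the stated periodicity condition) that $\bar v/\omega-\bar r>0$, so $\eta$ is well defined and positive. *)

From Stdlib Require Import Reals.
From Coquelicot Require Import Coquelicot.
From mathcomp Require Import all_boot all_algebra.
From mathcomp Require Import Rstruct.
Set Implicit Arguments. Unset Strict Implicit. Unset Printing Implicit Defensive.
Import GRing.Theory.
Local Open Scope ring_scope.

Definition mx2 (a b c d : R) : 'M[R]_2 :=
  \matrix_(i < 2, j < 2)
    if (i == 0 :> nat) then (if (j == 0 :> nat) then a else b)
    else (if (j == 0 :> nat) then c else d).
Definition cv2 (a b : R) : 'cV[R]_2 :=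
  \col_(i < 2) if (i == 0 :> nat) then a else b.

Definition mexp (M : 'M[R]_2) : 'M[R]_2 :=
  \matrix_(i < 2, j < 2) Series (fun k => ((M ^+ k) i j / (k`!)%:R)).

Definition Amat (w : R) : 'M[R]_2 := mx2 0 1 (w ^+ 2) 0.
Definition Bvec (w : R) : 'cV[R]_2 := cv2 0 (- w ^+ 2).

Definition xref (w rb vb tau : R) : 'cV[R]_2 :=
  mexp (tau *: Amat w) *m cv2 (- rb) vb.

Definition etaf (w rb vb e : R) : R :=
  ((e - rb + sqrt (e ^+ 2 - 2 * rb * e + (vb / w) ^+ 2)) / (vb / w - rb))%R.

Definition ip : 'I_2 := ord0.        (* position component *)
Definition iv : 'I_2 := ord_max.     (* velocity component *)

From Stdlib Require Import Reals.
From Coquelicot Require Import Coquelicot.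
From mathcomp Require Import all_boot all_order all_algebra.
From mathcomp Require Import Rstruct.
From mathcomp Require Import ring lra.
Import Order.TTheory GRing.Theory Num.Theory.
Local Open Scope ring_scope.

(* The matrix Amat w has eigenvalues w and -w, with spectral projectors
   Aproj w and Aproj (-w); hence e^{tA} = e^{wt} Aproj w + e^{-wt} Aproj (-w),
   and x_r is the sum of a growing mode of amplitude amp = (vb/w - rb)/2 and a
   decaying one of amplitude (vb/w + rb)/2.  Since x_r' = A x_r, the error
   obeys the same linear flow as x.  The periodicity condition says that the
   decaying amplitude is E * amp with E = e^{wT}.  At a contact point x_p = rb
   the radicand in eta is then the perfect square (amp (a + E/a))^2, where
   a = e^{w tau}, so eta = E / a; the jump of the error,
   x_r(tau) - x_r(tau - T) - 2 rb e_1, is then rb (eta + 1/eta - 2, w (1/eta - eta)). *)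

Lemma ord2P (i : 'I_2) : i = ip \/ i = iv.
Proof. by case: i => [[|[|//]] hi]; [left|right]; apply: val_inj. Qed.

Lemma mx2E (M : 'M[R]_2) : M = mx2 (M ip ip) (M ip iv) (M iv ip) (M iv iv).
Proof.
apply/matrixP => i j; rewrite mxE.
by case: (ord2P i) => ->; case: (ord2P j) => ->.
Qed.

Lemma cv2E (v : 'cV[R]_2) : v = cv2 (v ip 0) (v iv 0).
Proof.
apply/matrixP => i j; rewrite mxE (ord1 j).
by case: (ord2P i) => ->.
Qed.

Lemma mulmx_mx2 (a b c d a' b' c' d' : R) :
  mx2 a b c d *m mx2 a' b' c' d'
  = mx2 (a * a' + b * c') (a * b' + b * d') (c * a' + d * c') (c * b' + d * d').
Proof.
by rewrite [LHS]mx2E; congr mx2; rewrite !mxE !big_ord_recl big_ord0 !mxE /= !addr0.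
Qed.

Lemma mulmx_mx2_cv2 (a b c d p q : R) :
  mx2 a b c d *m cv2 p q = cv2 (a * p + b * q) (c * p + d * q).
Proof.
by rewrite [LHS]cv2E; congr cv2; rewrite !mxE !big_ord_recl big_ord0 !mxE /= !addr0.
Qed.

Lemma scale_mx2 (k a b c d : R) : k *: mx2 a b c d = mx2 (k * a) (k * b) (k * c) (k * d).
Proof. by rewrite [LHS]mx2E !mxE. Qed.

Lemma add_mx2 (a b c d a' b' c' d' : R) :
  mx2 a b c d + mx2 a' b' c' d' = mx2 (a + a') (b + b') (c + c') (d + d').
Proof. by rewrite [LHS]mx2E !mxE. Qed.

Lemma mx2_1 : mx2 1 0 0 1 = 1.
Proof. by rewrite [RHS]mx2E !mxE. Qed.

Lemma expr_spectral (K : comPzRingType) (A : lalgType K) (M P Q : A) (y z : K) :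
  P + Q = 1 -> P * M = y *: P -> Q * M = z *: Q ->
  forall k, M ^+ k = y ^+ k *: P + z ^+ k *: Q.
Proof.
move=> PQ1 PM QM; elim=> [|k IHk]; first by rewrite !expr0 !scale1r.
by rewrite !exprSr IHk mulrDl -!scalerAl PM QM !scalerA.
Qed.

Lemma is_series_exp (y : R) : is_series (fun k => y ^+ k / (k`!)%:R) (exp y).
Proof.
apply: is_series_ext (is_exp_Reals y) => k.
by rewrite pow_n_pow /scal /= /mult /= RpowE INRE factE RmultE mulrC.
Qed.

Lemma mexp_spectral (M P Q : 'M[R]_2) (y z : R) :
  (forall k, M ^+ k = y ^+ k *: P + z ^+ k *: Q) ->
  mexp M = exp y *: P + exp z *: Q.
Proof.
move=> powM; apply/matrixP => i j; rewrite !mxE; apply: is_series_unique.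
have := is_series_plus _ _ _ _ (is_series_scal_r (P i j) _ _ (is_series_exp y))
                               (is_series_scal_r (Q i j) _ _ (is_series_exp z)).
apply: is_series_ext => k.
rewrite powM !mxE /plus /= !RealsE; ring.
Qed.

(* For l = w or l = - w, the spectral projector of Amat w for the eigenvalue l. *)
Definition Aproj (l : R) : 'M[R]_2 := mx2 (1 / 2) (1 / (2 * l)) (l / 2) (1 / 2).

Section Eigenprojections.
Variables (w l : R).
Hypotheses (l0 : l != 0) (l2 : l ^+ 2 = w ^+ 2).

Lemma Aproj_sum : Aproj l + Aproj (- l) = 1.
Proof. by rewrite add_mx2 -mx2_1; congr mx2; rewrite !RealsE /=; field. Qed.

Lemma Aproj_mulA : Aproj l *m Amat w = l *: Aproj l.
Proof. by rewrite mulmx_mx2 scale_mx2 -l2; congr mx2; rewrite !RealsE /=; field. Qed.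

Lemma Amat_mulAproj : Amat w *m Aproj l = l *: Aproj l.
Proof. by rewrite mulmx_mx2 scale_mx2 -l2; congr mx2; rewrite !RealsE /=; field. Qed.

End Eigenprojections.

Lemma mexp_Amat (w t : R) : w != 0 ->
  mexp (t *: Amat w) = exp (w * t) *: Aproj w + exp (- (w * t)) *: Aproj (- w).
Proof.
move=> w0; apply: mexp_spectral; apply: expr_spectral.
- exact: Aproj_sum.
- by rewrite -scalerAr -mulmxE Aproj_mulA // scalerA mulrC.
- by rewrite -scalerAr -mulmxE Aproj_mulA ?oppr_eq0 ?sqrrN // scalerA mulrC mulNr.
Qed.

Lemma is_derive_mexp_Amat (w t : R) (v : 'cV[R]_2) (i : 'I_2) : w != 0 ->
  is_derive (fun s : R => (mexp (s *: Amat w) *m v) i 0) t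
            ((Amat w *m (mexp (t *: Amat w) *m v)) i 0).
Proof.
move=> w0; set p := Aproj w *m v; set q := Aproj (- w) *m v.
(* Written with the operators of Reals so that auto_derive recognizes it. *)
have modes (s : R) : (mexp (s *: Amat w) *m v) i 0
    = Rplus (Rmult (exp (Rmult w s)) (p i 0)) (Rmult (exp (- (w * s))) (q i 0)).
  by rewrite mexp_Amat // mulmxDl -!scalemxAl !mxE !RealsE.
apply: (is_derive_ext _ _ _ _ (fun s => esym (modes s))).
rewrite mexp_Amat // mulmxDl -!scalemxAl mulmxDr -!scalemxAr !mulmxA.
rewrite !Amat_mulAproj ?oppr_eq0 ?sqrrN // -!scalemxAl -/p -/q !mxE.
by auto_derive => //; rewrite !RealsE /=; ring.
Qed.

Lemma tracking_error_flow (w rb vb : R) (x : R -> 'cV[R]_2) (tau u : R -> R) (t : R) :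
  w != 0 ->
  (forall i : 'I_2, is_derive (fun s : R => x s i 0) t ((Amat w *m x t + u t *: Bvec w) i 0)) ->
  is_derive tau t 1 ->
  forall i : 'I_2, is_derive (fun s : R => (x s - xref w rb vb (tau s)) i 0) t
    ((Amat w *m (x t - xref w rb vb (tau t)) + u t *: Bvec w) i 0).
Proof.
move=> w0 hx htau i.
have hxr := is_derive_comp _ _ _ _ _ (is_derive_mexp_Amat w (tau t) (cv2 (- rb) vb) i w0) htau.
apply: (is_derive_ext (fun s => minus (x s i 0) (xref w rb vb (tau s) i 0))).
  by move=> s; rewrite !mxE.
have -> : (Amat w *m (x t - xref w rb vb (tau t)) + u t *: Bvec w) i 0
    = minus ((Amat w *m x t + u t *: Bvec w) i 0) (scal (1 : R) ((Amat w *m xref w rb vb (tau t)) i 0)).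
  by rewrite scal_one /minus /plus /opp /= mulmxBr !mxE !RealsE addrAC.
exact: is_derive_minus (hx i) hxr.
Qed.

Lemma exp_gt0 (y : R) : 0 < exp y.
Proof. exact/RltP/exp_pos. Qed.

Lemma exp_neq0 (y : R) : exp y != 0.
Proof. exact: lt0r_neq0 (exp_gt0 y). Qed.

Lemma xrefE (w rb vb tau : R) : w != 0 ->
  xref w rb vb tau =
    cv2 ((vb / w - rb) / 2 * exp (w * tau) - (vb / w + rb) / 2 / exp (w * tau))
        (w * ((vb / w - rb) / 2 * exp (w * tau) + (vb / w + rb) / 2 / exp (w * tau))).
Proof.
move=> w0; rewrite /xref mexp_Amat // mulmxDl -!scalemxAl !mulmx_mx2_cv2 exp_Ropp.
by rewrite [LHS]cv2E !mxE /=; congr cv2; rewrite !RealsE /=; field; rewrite exp_neq0 w0.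
Qed.

Lemma exp_mulB (w t T : R) : exp (w * (t - T)) = exp (w * t) / exp (w * T).
Proof. by rewrite -RinvE -exp_Ropp -RmultE -exp_plus; congr exp; rewrite !RealsE; ring. Qed.

Section PeriodicReference.
Variables (w rb vb T : R).
Hypotheses (hw : 0 < w) (hrb : 0 < rb) (hvb : 0 < vb).
Hypothesis hper : mexp (T *: Amat w) *m cv2 (- rb) vb = cv2 rb vb.

Let w0 : w != 0. Proof. exact: lt0r_neq0. Qed.
Let E := exp (w * T).
Let amp := (vb / w - rb) / 2.

Lemma xref_period_gain : vb / w + rb = E * (vb / w - rb).
Proof.
have := congr1 (fun v : 'cV[R]_2 => v ip 0) hper.
rewrite -/(xref w rb vb T) xrefE // !mxE /= -/E !RealsE /= => h0.
have key : (E + 1) * (E * (vb / w - rb) - (vb / w + rb))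
         = 2 * E * ((vb / w - rb) / 2 * E - (vb / w + rb) / 2 / E - rb).
  by field; rewrite exp_neq0.
move: key; rewrite h0 subrr mulr0 => /eqP; rewrite mulf_eq0 => /orP[/eqP|].
  by have := exp_gt0 (w * T); rewrite -/E; lra.
by rewrite subr_eq0 => /eqP ->.
Qed.

Lemma amp_gt0 : 0 < amp.
Proof.
have E0 : 0 < E := exp_gt0 _.
have c0 : 0 < vb / w + rb by rewrite addr_gt0 // divr_gt0.
by move: c0; rewrite xref_period_gain pmulr_rgt0 // /amp => c0; rewrite divr_gt0.
Qed.

Lemma rbE : rb = amp * (E - 1).
Proof. by rewrite /amp mulrBr mulr1 mulrAC [_ * E]mulrC -xref_period_gain; field; exact: w0. Qed.

Lemma speedE : vb / w = amp * (E + 1).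
Proof. by rewrite /amp mulrDr mulr1 mulrAC [_ * E]mulrC -xref_period_gain; field; exact: w0. Qed.

Lemma xref_periodicE (tau : R) :
  xref w rb vb tau = amp *: cv2 (exp (w * tau) - E / exp (w * tau))
                               (w * (exp (w * tau) + E / exp (w * tau))).
Proof.
rewrite xrefE // !RealsE /= xref_period_gain -mulrA -/amp [RHS]cv2E !mxE /=.
by congr cv2; rewrite /amp /E; field; rewrite exp_neq0 w0.
Qed.

Lemma xref_jump (tau : R) :
  let a := exp (w * tau) in
  xref w rb vb tau - xref w rb vb (tau - T) = rb *: cv2 (a / E + E / a) (w * (a / E - E / a)).
Proof.
move=> a; rewrite !xref_periodicE exp_mulB -/a -/E rbE.
have a0 : a != 0 := exp_neq0 _.
have E0 : E != 0 := exp_neq0 _.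
(* Otherwise field unfolds the local definitions and sees rb again. *)
clearbody a E amp.
by rewrite [LHS]cv2E [RHS]cv2E !mxE /=; congr cv2; rewrite !RealsE; field; rewrite a0 E0.
Qed.

Lemma etaf_contact (tau : R) :
  etaf w rb vb (rb - xref w rb vb tau ip 0) = E / exp (w * tau).
Proof.
rewrite /etaf xref_periodicE speedE !mxE /= rbE; set a := exp (w * tau).
have amp0 : 0 < amp := amp_gt0.
have a0 : 0 < a := exp_gt0 _.
have E0 : 0 < E := exp_gt0 _.
rewrite (_ : sqrt _ = amp * (a + E / a)); last first.
  rewrite -[RHS]sqrt_square; last first.
    by apply/RleP; rewrite !RealsE ltW // mulr_gt0 // addr_gt0 // divr_gt0.
  by congr sqrt; clearbody a E amp; rewrite !RealsE /=; field; rewrite lt0r_neq0.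
by clearbody a E amp; rewrite !RealsE /=; field; rewrite !lt0r_neq0 //; lra.
Qed.

Lemma tracking_error_jump (x : 'cV[R]_2) (tau : R) :
  x ip 0 = rb ->
  let eps := x - xref w rb vb tau in
  let et := etaf w rb vb (eps ip 0) in
  (x + cv2 (- (2 * rb)) 0) - xref w rb vb (tau - T)
  = eps + rb *: cv2 (et + et^-1 - 2) (w * (et^-1 - et)).
Proof.
move=> xp eps et.
have -> : et = E / exp (w * tau) by rewrite /et -etaf_contact !mxE xp.
have -> : xref w rb vb (tau - T)
          = xref w rb vb tau - (xref w rb vb tau - xref w rb vb (tau - T)) by rewrite subKr.
rewrite xref_jump /eps; set X := xref w rb vb tau; set a := exp (w * tau).
have a0 : a != 0 := exp_neq0 _.
have E0 : E != 0 := exp_neq0 _.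
clearbody X a E.
by rewrite [LHS]cv2E [RHS]cv2E !mxE /=; congr cv2; rewrite !RealsE /=; field; rewrite a0 E0.
Qed.

End PeriodicReference.

Theorem lemma1 (w rb vb T : R) (hw : 0 < w) (hrb : 0 < rb) (hvb : 0 < vb) (hT : 0 < T)
  (hper : mexp (T *: Amat w) *m cv2 (- rb) vb = cv2 rb vb) :
  (* flows: along any flowing solution, eps' = A eps + B u *)
  (forall (x : R -> 'cV[R]_2) (tau u : R -> R) (t : R),
      - rb <= x t ip 0 <= rb -> - T <= tau t <= 2 * T ->
      (forall i : 'I_2, is_derive (fun s => x s i 0) t
                          ((Amat w *m x t + u t *: Bvec w) i 0)) ->
      is_derive tau t 1 ->
      forall i : 'I_2,
        is_derive (fun s => (x s - xref w rb vb (tau s)) i 0) t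
          ((Amat w *m (x t - xref w rb vb (tau t)) + u t *: Bvec w) i 0))
  /\
  (* jumps: (x,tau) in D x [-T,2T], x^+ = x + [-2rb;0], tau^+ = tau - T *)
  (forall (x : 'cV[R]_2) (tau : R),
      - rb <= x ip 0 <= rb -> x ip 0 = rb -> - T <= tau <= 2 * T ->
      let eps := x - xref w rb vb tau in
      let et := etaf w rb vb (eps ip 0) in
      (x + cv2 (- (2 * rb)) 0) - xref w rb vb (tau - T)
      = eps + rb *: cv2 (et + et^-1 - 2) (w * (et^-1 - et))).
Proof.
split.
- move=> x tau u t _ _; exact: tracking_error_flow (lt0r_neq0 hw).
- move=> x tau _ xp _; exact: tracking_error_jump.
Qed.
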